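(* Let $\pi=\pi_1\cdots\pi_n$ be a permutation of $\{1,\dots,n\}$. The Schröder insertion tableau $P(\pi)$ has a single row if and only if for all $1\le i\le n$: (1) if $i$ is odd, then $\pi_i$ is a left-to-right maximum of $\pi$, i.e. $\pi_i>\pi_j$ for all $j<i$; (2) if $i$ is even, then $\pi_i$ is a left-to-right maximum of the sequence obtained from $\pi$ by deleting $\pi_{i-1}$, i.e. $\pi_i>\pi_j$ for all $j<i$ with $j\ne i-1$.
   Context: A Schröder tableau consists of rows $1,2,\dots$; row $r$ has $\lambda_r$ cells at positions $1,\dots,\lambda_r$ (with $\lambda_1\ge\lambda_2\ge\cdots$), each filled with a number. Cells at odd positions are upper triangles, cells at even positions are lower triangles; positions $2m-1$ and $2m$ of a row are twins (they form one square). The Schröder insertion tableau $P(\pi)$ is built as follows. Start with $P$ having one row containing $\pi_1$ at position 1. For $k=2,\dots,n$, insert $\alpha=\pi_k$ into row $i=1$ by the rule: if row $i$ is empty or $\alpha$ is larger than all its entries, place $\alpha$ in a new cell at the end of row $i$ and stop. Otherwise let $j$ be the position in row $i$ of the smallest entry larger than $\alpha$. If $j$ is even (lower triangle): remove the entry $\beta$ at position $j$, write $\alpha$ there, and insert $\beta$ into row $i+1$ by the same rule. If $j$ is odd (upper triangle) and position $j+1$ exists in row $i$ with entry $\beta$: move the entry of position $j$ to position $j+1$, write $\alpha$ at position $j$, and insert $\beta$ into row $i+1$ by the same rule. If $j$ is odd and $j$ is the last position of row $i$: move the entry of position $j$ into a new cell at position $j+1$ at the end of row $i$, write $\alpha$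 at position $j$, and stop. The final $P$ is $P(\pi)$. *)

From mathcomp Require Import all_boot.
Set Implicit Arguments. Unset Strict Implicit. Unset Printing Implicit Defensive.

(* The cell at (1-indexed) position j of a row is stored at list index j-1;
   so odd positions (upper triangles) are even list indices and even
   positions (lower triangles) are odd list indices. *)
Definition tableau := seq (seq nat).

(* the smallest entry of [r] larger than [a] (default 0 if none) *)
Definition min_above (a : nat) (r : seq nat) : nat :=
  foldr (fun x m => if (a < x) && ((m == 0) || (x < m)) then x else m) 0 r.

Definition row_insert (a : nat) (r : seq nat) : seq nat * option nat :=
  if all (fun x => x < a) r then (rcons r a, None)
  else
    let k := index (min_above a r) r in    (* 0-based index; position j = k+1 *)
    if odd k then                          (* j even : lower triangle *)
      (set_nth 0 r k a, Some (nth 0 r k))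
    else if k.+1 < size r then
      (set_nth 0 (set_nth 0 r k.+1 (nth 0 r k)) k a, Some (nth 0 r k.+1))
    else
      (rcons (set_nth 0 r k a) (nth 0 r k), None).

Fixpoint tab_insert (a : nat) (t : tableau) : tableau :=
  match t with
  | [::] => [:: [:: a]]
  | r :: t' =>
      let (r', ob) := row_insert a r in
      match ob with
      | None => r' :: t'
      | Some b => r' :: tab_insert b t'
      end
  end.

Definition schroder_P (pi : seq nat) : tableau :=
  match pi with
  | [::] => [::]
  | p1 :: rest => foldl (fun t a => tab_insert a t) [:: [:: p1]] rest
  end.

Definition is_perm_of (n : nat) (pi : seq nat) : Prop :=
  perm_eq pi (iota 1 n).

From mathcomp Require Import all_boot zify.

(* While P(pi_1 ... pi_m) is a single row, that row lists pi_1, ..., pi_m in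
   increasing order.  Inserting a into an increasing row r of length m bumps
   nothing exactly when a exceeds every entry of r, the last one excepted when
   m is odd: a may then take position m, and the old maximum moves into the
   new lower triangle at position m + 1.  For odd m the maximum of
   pi_1 ... pi_m is pi_m by condition (1) at step m, so "all entries but the
   maximum" is "all of pi_1 ... pi_(m-1)", which is condition (2) for
   i = m + 1.  Once a second row appears it never
   disappears. *)

Lemma sorted_ltn_rcons (r : seq nat) x :
  sorted ltn (rcons r x) = sorted ltn r && all (fun y => y < x) r.
Proof.
by rewrite !(sorted_pairwise ltn_trans) -cats1 pairwise_cat /= andbT andbC allrel1r.
Qed.

Lemma sorted_ltn_perm_rcons_max {r s : seq nat} {y x} :
  sorted ltn (rcons r y) -> perm_eq (rcons r y) (rcons s x) ->
  all (fun z => z < x) s -> perm_eq r s.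
Proof.
rewrite sorted_ltn_rcons => /andP[_ /allP r_lt_y] rs /allP s_lt_x.
suff yx : y = x by move: rs; rewrite yx -!cats1 perm_cat2r.
apply/eqP; apply: contraT => y_neq_x.
have : y \in rcons s x by rewrite -(perm_mem rs) mem_rcons mem_head.
have : x \in rcons r y by rewrite (perm_mem rs) mem_rcons mem_head.
rewrite !mem_rcons !in_cons [x == y]eq_sym (negbTE y_neq_x) /=.
move=> /r_lt_y x_lt_y /s_lt_x y_lt_x.
by have := ltn_trans x_lt_y y_lt_x; rewrite ltnn.
Qed.

Lemma min_above0 a r : ~~ has (fun x => a < x) r -> min_above a r = 0.
Proof. by elim: r => //= x r IH; rewrite negb_or => /andP[/negbTE -> /IH]. Qed.

Lemma min_above_sorted {a r} : sorted ltn r -> has (fun x => a < x) r ->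
  min_above a r = nth 0 r (find (fun x => a < x) r).
Proof.
elim: r => //= x r IH r_sorted; have sorted_r := path_sorted r_sorted.
case: (boolP (a < x)) => /= [a_lt_x _ | _ /(IH sorted_r) //].
have [has_r | /min_above0 -> //] := boolP (has (fun x => a < x) r).
rewrite IH // ifT //; apply/orP; right.
have /allP := order_path_min ltn_trans r_sorted; apply.
by apply: mem_nth; rewrite -has_find.
Qed.

Lemma odd_or_ltnS_subn_odd {k n} : k < n -> (odd k || (k.+1 < n)) = (k < n - odd n).
Proof.
case: (ltngtP k.+1 n) => [lt_kn _ | n_lt_kS k_lt_n | <- _].
- by rewrite orbT; lia.
- by move: n_lt_kS; rewrite ltnNge k_lt_n.
- by rewrite orbF /=; case: (odd k); rewrite /= ?subn0 ?subn1 ?ltnSn ?ltnn.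
Qed.

Lemma sorted_ltn_rcons_before_last r0 x a :
  sorted ltn (rcons r0 x) -> all (fun y => y < a) r0 -> a < x ->
  sorted ltn (rcons (rcons r0 a) x) && perm_eq (rcons (rcons r0 a) x) (rcons (rcons r0 x) a).
Proof.
rewrite !sorted_ltn_rcons all_rcons => /andP[-> ->] -> -> /=.
by rewrite -!cats1 -!catA perm_cat2l (perm_catC [:: a] [:: x]).
Qed.

Lemma row_insert_sorted {a r} : sorted ltn r -> a \notin r ->
  if all (fun y => y < a) (take (size r - odd (size r)) r)
  then exists2 r', row_insert a r = (r', None) & sorted ltn r' && perm_eq r' (rcons r a)
  else (row_insert a r).2 != None.
Proof.
move=> r_sorted a_notin_r; rewrite /row_insert.
have [r_lt_a | /allPn[z z_in_r a_le_z]] := boolP (all (fun y => y < a) r).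
  rewrite ifT; last by apply/allP => y /mem_take /(allP r_lt_a).
  by exists (rcons r a); rewrite // sorted_ltn_rcons r_sorted r_lt_a perm_refl.
have has_gt : has (fun y => a < y) r.
  apply/hasP; exists z; rewrite // ltn_neqAle leqNgt a_le_z andbT.
  by apply: contraNneq a_notin_r => ->.
set k := find (fun y => a < y) r.
have k_lt : k < size r by rewrite -has_find.
have a_lt_rk : a < nth 0 r k := nth_find 0 has_gt.
rewrite (min_above_sorted r_sorted has_gt) index_uniq ?(sorted_uniq ltn_trans ltnn) //.
have bumps := odd_or_ltnS_subn_odd k_lt.
have span_le : size r - odd (size r) <= size r := leq_subr _ _.
have [k_lt_span | k_ge_span] := boolP (k < size r - odd (size r)).
  rewrite ifF; last first.
    apply/negbTE/allPn; exists (nth 0 r k); last by rewrite -leqNgt ltnW.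
    by rewrite -(nth_take 0 k_lt_span) mem_nth // size_takel.
  by move: bumps; rewrite k_lt_span; case: (odd k) => //= ->.
have prefix_lt_a : all (fun y => y < a) (take k r).
  apply/(all_nthP 0) => j; rewrite size_takel ?(ltnW k_lt) // => j_lt_k.
  rewrite nth_take // ltn_neqAle leqNgt (before_find 0 j_lt_k) andbT.
  by apply: contraNneq a_notin_r => <-; rewrite mem_nth // (ltn_trans j_lt_k).
rewrite ifT; last first.
  apply/allP => y y_in; apply: (allP prefix_lt_a).
  have span_le_k : size r - odd (size r) <= k by rewrite leqNgt.
  by rewrite -(minn_idPl span_le_k) take_min in y_in; apply: mem_take y_in.
move: bumps; rewrite (negbTE k_ge_span) => /norP[/negbTE -> k_last].
have size_r : size r = k.+1 by apply/eqP; rewrite eqn_leq k_lt leqNgt k_last.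
rewrite ifF ?(negbTE k_last) //; eexists; first reflexivity.
have r_eq : r = rcons (take k r) (nth 0 r k) by rewrite -take_nth // -size_r take_size.
rewrite set_nthE k_lt drop_oversize ?size_r // -/k cats1.
move: r_eq r_sorted prefix_lt_a a_lt_rk; move: (take k r) (nth 0 r k) => r0 x ->.
exact: sorted_ltn_rcons_before_last.
Qed.

(* Conditions (1) and (2) of the theorem for the 0-based index k = i - 1:
   for odd k (even i) the entry pi_(i-1), at index k - 1, is excused. *)
Definition lrmax_cond (pi : seq nat) (k : nat) : bool :=
  all (fun y => y < nth 0 pi k) (take (k - odd k) pi).

Lemma lrmax_cond_row {s k r} : k.+1 < size s -> sorted ltn r ->
  perm_eq r (take k.+1 s) -> lrmax_cond s k ->
  lrmax_cond s k.+1 = all (fun y => y < nth 0 s k.+1) (take (size r - odd (size r)) r).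
Proof.
move=> k_lt r_sorted r_perm prev_cond.
have size_r : size r = k.+1 by rewrite (perm_size r_perm) size_takel // ltnW.
rewrite /lrmax_cond size_r /=; case: (boolP (odd k)) => [_ | k_even] /=.
  by rewrite subn0 [take _ r]take_oversize ?size_r // (perm_all _ r_perm).
rewrite subn1 /=.
move: prev_cond r_sorted r_perm; rewrite /lrmax_cond (negbTE k_even) subn0.
rewrite (take_nth 0 (ltnW k_lt)); case/lastP: r size_r => [//|r0 y].
rewrite size_rcons => -[size_r0]; rewrite -cats1 -size_r0 take_size_cat // cats1.
move=> last_max r_sorted r_perm.
by rewrite (perm_all _ (sorted_ltn_perm_rcons_max r_sorted r_perm last_max)).
Qed.

Lemma schroder_P_rcons s a :
  s != [::] -> schroder_P (rcons s a) = tab_insert a (schroder_P s).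
Proof. by case: s => // p s _; rewrite rcons_cons /= foldl_rcons. Qed.

Lemma size_tab_insert a t : size t <= size (tab_insert a t).
Proof. by elim: t a => //= r t IH a; case: (row_insert a r) => r' [b|] /=; rewrite ltnS. Qed.

Lemma schroder_P_take pi k : uniq pi -> k < size pi ->
  if all (lrmax_cond pi) (iota 0 k.+1)
  then exists2 r, schroder_P (take k.+1 pi) = [:: r] & sorted ltn r && perm_eq r (take k.+1 pi)
  else 1 < size (schroder_P (take k.+1 pi)).
Proof.
move=> pi_uniq; elim: k => [|k IH] k_lt.
  case: pi pi_uniq k_lt => // p pi _ _; rewrite /lrmax_cond /= take0.
  by exists [:: p] => //=; rewrite perm_refl.
have prefix_neq0 : take k.+1 pi != [::] by rewrite -size_eq0 size_takel // ltnW.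
rewrite (take_nth 0 k_lt) schroder_P_rcons // -addn1 iotaD all_cat add0n all_seq1.
have := IH (ltnW k_lt); case: (boolP (all _ (iota 0 k.+1))) => [all_prev | _ P_big]; last first.
  exact: leq_trans P_big (size_tab_insert _ _).
case=> r -> /andP[r_sorted r_perm].
have prev : lrmax_cond pi k by apply: (allP all_prev); rewrite mem_iota add0n ltnSn.
rewrite andTb (lrmax_cond_row k_lt r_sorted r_perm prev).
have a_notin_r : nth 0 pi k.+1 \notin r.
  by rewrite (perm_mem r_perm) in_take ?mem_nth // index_uniq // ltnn.
have := row_insert_sorted r_sorted a_notin_r.
case: ifP => [_ [r' row_eq /andP[r'_sorted r'_perm]] | _ bumped] /=.
  rewrite row_eq; exists r'; rewrite // r'_sorted (perm_trans r'_perm) //.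
  by rewrite -!cats1 perm_cat2r.
by case: row_insert bumped => r' [b|].
Qed.

Lemma lrmax_condP pi i : 0 < i <= size pi ->
  reflect ((odd i -> forall j, 1 <= j < i -> nth 0 pi j.-1 < nth 0 pi i.-1) /\
           (~~ odd i -> forall j, 1 <= j < i -> j != i.-1 -> nth 0 pi j.-1 < nth 0 pi i.-1))
          (lrmax_cond pi i.-1).
Proof.
case: i => [//|k] /andP[_ k_lt] /=.
have span_le : k - odd k <= size pi by rewrite (leq_trans (leq_subr _ _)) // ltnW.
apply: (iffP (all_nthP 0)); rewrite size_takel //.
  move=> take_lt.
  have prefix_lt j : j < k - odd k -> nth 0 pi j < nth 0 pi k.
    by move=> j_lt; rewrite -(nth_take 0 j_lt) take_lt.
  split=> [k_even | /negPn k_odd] [//|j] /andP[_ j_lt] /=.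
    by apply: prefix_lt; rewrite (negbTE k_even) subn0.
  by move=> j_ne; apply: prefix_lt; rewrite k_odd; lia.
move=> [odd_case even_case] j j_lt; rewrite nth_take //.
case: (boolP (odd k)) j_lt => [k_odd | k_even] /= j_lt.
  by apply: (even_case _ j.+1); [rewrite k_odd | lia | lia].
by apply: (odd_case k_even j.+1); lia.
Qed.

Theorem mainTheorem7 (n : nat) (pi : seq nat) :
  1 <= n ->
  is_perm_of n pi ->
  (size (schroder_P pi) = 1 <->
   forall i, 1 <= i <= n ->
     (odd i -> forall j, 1 <= j < i -> nth 0 pi j.-1 < nth 0 pi i.-1) /\
     (~~ odd i -> forall j, 1 <= j < i -> j != i.-1 ->
                    nth 0 pi j.-1 < nth 0 pi i.-1)).
Proof.
move=> n_pos pi_perm.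
have size_pi : size pi = n by rewrite (perm_size pi_perm) size_iota.
have pi_uniq : uniq pi by rewrite (perm_uniq pi_perm) iota_uniq.
have take_pi : take n pi = pi by rewrite -size_pi take_size.
have := schroder_P_take pi n.-1 pi_uniq.
rewrite prednK // take_pi size_pi leqnn => /(_ isT) P_spec.
transitivity (all (lrmax_cond pi) (iota 0 n)).
  case: (boolP (all _ _)) P_spec => [_ [r -> _] | _ P_big]; split=> // size_P.
  by rewrite size_P in P_big.
split=> [/allP all_cond i i_range | all_cond].
  by apply/lrmax_condP; [rewrite size_pi | apply: all_cond; rewrite mem_iota; lia].
apply/allP => k; rewrite mem_iota add0n => k_lt.
by apply/(lrmax_condP pi k.+1); [rewrite size_pi | apply: all_cond].
Qed.
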